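(* Let $\pi,\tau\in\mathfrak{S}_m$. Then $\pi$ and $\tau$ are super-strongly c-Wilf equivalent if and only if $r^\pi_{n,S}=r^\tau_{n,S}$ for all $n$ and all sets $S$ of positive integers.
   Context: The standardization $\operatorname{st}(w)$ of a word of distinct integers replaces its smallest entry by 1, the next smallest by 2, etc. For $\pi\in\mathfrak{S}_m$ and $\sigma\in\mathfrak{S}_n$, $\operatorname{Em}(\pi,\sigma)=\{i\in[n-m+1]:\operatorname{st}(\sigma_i\cdots\sigma_{i+m-1})=\pi\}$. For a set $S$ of positive integers, $a^\pi_{n,S}$ is the number of $\sigma\in\mathfrak{S}_n$ with $\operatorname{Em}(\pi,\sigma)=S$; $\pi,\tau$ are super-strongly c-Wilf equivalent if $a^\pi_{n,S}=a^\tau_{n,S}$ for all $n,S$. The overlap set is $\mathcal{O}_\pi=\{i\in[m-1]:\operatorname{st}(\pi_{i+1}\cdots\pi_m)=\operatorname{st}(\pi_1\cdots\pi_{m-i})\}$. The refined cluster number $r^\pi_{n,S}$ is defined as follows: if $S=\{i_1<\dots<i_k\}\subseteq[n-m+1]$ satisfies $i_1=1$, $i_k=n-m+1$ and $i_{j+1}-i_j\in\mathcal{O}_\pi$ for all $j\in[k-1]$, then $r^\pi_{n,S}$ is the number of $\sigma\in\mathfrak{S}_n$ with $S\subseteq\operatorname{Em}(\pi,\sigma)$; otherwise $r^\pi_{n,S}=0$. *)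

From mathcomp Require Import all_boot all_order all_fingroup.
From mathcomp Require Import finmap.
Set Implicit Arguments. Unset Strict Implicit. Unset Printing Implicit Defensive.
Local Open Scope fset_scope.

(* A permutation sigma in S_n (perm of 'I_n) is viewed as the word
   sigma_1 ... sigma_n with sigma_k = (sigma (k-1)).+1  (values in 1..n). *)
Definition word (n : nat) (s : 'S_n) : seq nat :=
  [seq (s i).+1 | i <- enum 'I_n].

Definition st (w : seq nat) : seq nat :=
  [seq (count (fun y => y < x) w).+1 | x <- w].

Definition factor (w : seq nat) (i m : nat) : seq nat := take m (drop i.-1 w).

Definition Em (m n : nat) (p : 'S_m) (s : 'S_n) : {fset nat} :=
  [fset i | i in iota 1 (n - m + 1)%N & st (factor (word s) i m) == word p].

Definition a_num (m : nat) (p : 'S_m) (n : nat) (S : {fset nat}) : nat :=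
  #|[set s : 'S_n | Em p s == S]|.

Definition overlap (m : nat) (p : 'S_m) : pred nat :=
  fun i => [&& 1 <= i, i <= (m - 1)%N &
     st (drop i (word p)) == st (take (m - i)%N (word p))].

Definition cluster_set (m : nat) (p : 'S_m) (n : nat) (S : {fset nat}) : bool :=
  let l := sort leq S in
  [&& S `<=` [fset i | i in iota 1 (n - m + 1)%N],
      head 0 l == 1, last 0 l == (n - m + 1)%N &
      all (fun j => overlap p (nth 0 l j.+1 - nth 0 l j)%N) (iota 0 (size l).-1)].

Definition r_num (m : nat) (p : 'S_m) (n : nat) (S : {fset nat}) : nat :=
  if cluster_set p n S then #|[set s : 'S_n | S `<=` Em p s]| else 0.

Definition super_strongly_cwilf (m : nat) (p t : 'S_m) : Prop :=
  forall (n : nat) (S : {fset nat}), a_num p n S = a_num t n S.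

From mathcomp Require Import all_boot all_order all_fingroup.
From mathcomp Require Import finmap zify.
Set Implicit Arguments. Unset Strict Implicit. Unset Printing Implicit Defensive.
Local Open Scope fset_scope.
Local Open Scope nat_scope.

(* Let b^pi_{n,S} count the sigma with S contained in Em(pi, sigma).  Since
   b_{n,S} is the sum of the a_{n,T} over T containing S, the families a^pi and
   b^pi determine each other (downward induction on |S|).  Two occurrences of
   pi at distance d < m force d to lie in O_pi; so if S is a cluster set for pi
   or for tau, then r_{n,S} = b_{n,S} for both patterns, and otherwise both r's
   vanish.  Conversely, split S into maximal runs with gaps < m.  The
   occurrences of a run live in one window of sigma, the windows of distinct
   runs are disjoint, and permuting the entries inside one window fixes the
   patterns of all the others.  Hence b_{n,S} only depends on the number of
   admissible patterns of each window, which is the refined cluster number of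
   the run shifted to start at 1. *)

Definition rank (w : seq nat) (x : nat) : nat := (count (fun y => y < x) w).+1.

Lemma stE (w : seq nat) : st w = map (rank w) w.
Proof. by []. Qed.

Lemma st_map (g : nat -> nat) (w : seq nat) :
  {in w &, forall x y, (g x < g y) = (x < y)} -> st (map g w) = st w.
Proof.
move=> g_mono; rewrite /st -map_comp; apply/eq_in_map => x xw /=.
by rewrite count_map; congr S; apply: eq_in_count => y yw; apply: g_mono.
Qed.

Lemma count_lt_mono (w : seq nat) (x y : nat) : x \in w -> x < y ->
  count (fun z => z < x) w < count (fun z => z < y) w.
Proof.
move=> xw xy; rewrite -[count _ w in X in _ < X]size_filter.
rewrite -(count_predC (fun z => z < x)) !count_filter -addn1 leq_add //.
  by apply: sub_count => z /= zx; rewrite zx (ltn_trans zx xy).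
by rewrite -has_count; apply/hasP; exists x; rewrite //= xy ltnn.
Qed.

Lemma rank_mono (w : seq nat) : {in w &, forall x y, (rank w x < rank w y) = (x < y)}.
Proof.
move=> x y xw _; rewrite ltnS; case: (ltnP x y) => [|yx]; first exact: count_lt_mono.
by apply/negbTE; rewrite -leqNgt; apply: sub_count => z /= zy; apply: leq_trans yx.
Qed.

Lemma st_map_rank (w v : seq nat) : {subset v <= w} -> st (map (rank w) v) = st v.
Proof. by move=> vw; apply: st_map => x y /vw xw /vw yw; apply: rank_mono. Qed.

Lemma st_drop_st (d : nat) (w : seq nat) : st (drop d (st w)) = st (drop d w).
Proof. by rewrite [st w]stE -map_drop st_map_rank // => x /mem_drop. Qed.

Lemma st_take_st (d : nat) (w : seq nat) : st (take d (st w)) = st (take d w).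
Proof. by rewrite [st w]stE -map_take st_map_rank // => x /mem_take. Qed.

Definition positions (m n : nat) : {fset nat} := [fset i | i in iota 1 (n - m + 1)].

Lemma mem_positions (m n i : nat) : (i \in positions m n) = (0 < i <= n - m + 1).
Proof. by rewrite inE mem_iota; case: i => //= i; rewrite add1n ltnS. Qed.

Lemma size_word n (s : 'S_n) : size (word s) = n.
Proof. by rewrite size_map size_enum_ord. Qed.

Lemma nth_word n (s : 'S_n) (i : 'I_n) : nth 0 (word s) i = (s i).+1.
Proof. by rewrite (nth_map i) ?size_enum_ord // nth_ord_enum. Qed.

Lemma uniq_word n (s : 'S_n) : uniq (word s).
Proof. by rewrite map_inj_uniq ?enum_uniq // => i j /succn_inj /val_inj /perm_inj. Qed.

Definition occurs_at m (p : 'S_m) n (s : 'S_n) (i : nat) : bool :=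
  st (factor (word s) i m) == word p.

Section Occurrences.
Variables (m n : nat) (p : 'S_m) (s : 'S_n).

Lemma mem_Em (i : nat) : (i \in Em p s) = (i \in positions m n) && occurs_at p s i.
Proof. by rewrite !inE. Qed.

Lemma Em_sub_positions : Em p s `<=` positions m n.
Proof. by apply/fsubsetP => i; rewrite mem_Em => /andP[]. Qed.

Lemma Em_fset0 : n < m -> Em p s = fset0.
Proof.
move=> nm; apply/fsetP => i; rewrite mem_Em inE; apply/negbTE/nandP; right.
apply/eqP => /(congr1 size); rewrite size_map size_word size_take size_drop size_word.
case: ifP; lia.
Qed.

Lemma overlap_Em (i j : nat) :
  i \in Em p s -> j \in Em p s -> i < j -> j < i + m -> overlap p (j - i).
Proof.
rewrite !mem_Em !mem_positions => /andP[/andP[i0 _] /eqP ei] /andP[_ /eqP ej] ij jim.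
apply/and3P; split; [lia | lia |].
rewrite -{1}ei -ej st_drop_st st_take_st /factor take_takel ?leq_subr //.
have -> : j.-1 = j - i + i.-1 by lia.
by rewrite -drop_drop [take (m - _) _]take_drop subnK //; lia.
Qed.

End Occurrences.

Lemma card_preimset_sum (T : finType) (U : eqType) (f : T -> U) (X : seq U)
    (P : pred U) : uniq X -> (forall x, f x \in X) ->
  #|[set x | P (f x)]| = \sum_(u <- X | P u) #|[set x | f x == u]|.
Proof.
move=> uX fX; have card_sum (Q : pred T) : #|[set x | Q x]| = \sum_x Q x.
  by rewrite -sum1dep_card big_mkcond; apply: eq_bigr => x _; case: (Q x).
rewrite card_sum (eq_bigr (fun u => \sum_x (f x == u))) => [|u _]; last exact: card_sum.
rewrite exchange_big; apply: eq_bigr => x _ /=.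
rewrite big_mkcond (bigD1_seq (f x)) //= eqxx big1 ?addn0 => [|u]; first by case: (P _).
by rewrite eq_sym => /negbTE ->; case: (P u).
Qed.

Definition b_num m (p : 'S_m) n (S : {fset nat}) : nat :=
  #|[set s : 'S_n | S `<=` Em p s]|.

Section Inversion.
Variables (m n : nat).
Notation U := (positions m n).

Lemma b_num_sum (p : 'S_m) (S : {fset nat}) :
  b_num p n S = \sum_(T <- fpowerset U | S `<=` T) a_num p n T.
Proof.
rewrite /b_num (@card_preimset_sum _ _ _ (fpowerset U) (fun T => S `<=` T)) //.
by move=> s; rewrite fpowersetE Em_sub_positions.
Qed.

Lemma a_num_eq0 (p : 'S_m) (S : {fset nat}) : ~~ (S `<=` U) -> a_num p n S = 0.
Proof.
move=> SU; apply/eqP; rewrite cards_eq0; apply/eqP/setP => s; rewrite !inE.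
by apply: contraNF SU => /eqP <-; apply: Em_sub_positions.
Qed.

Lemma b_num_eq0 (p : 'S_m) (S : {fset nat}) : ~~ (S `<=` U) -> b_num p n S = 0.
Proof.
move=> SU; apply/eqP; rewrite cards_eq0; apply/eqP/setP => s; rewrite !inE.
by apply: contraNF SU => /fsubset_trans; apply; apply: Em_sub_positions.
Qed.

Lemma b_num_sum_proper (p : 'S_m) (S : {fset nat}) : S `<=` U ->
  b_num p n S = a_num p n S + \sum_(T <- fpowerset U | S `<` T) a_num p n T.
Proof.
move=> SU; rewrite b_num_sum (big_rem S) ?fpowersetE //= fsubset_refl.
rewrite rem_filter ?fset_uniq // big_filter_cond; congr addn.
by apply: eq_bigl => T; rewrite fproperEneq eq_sym.
Qed.

Lemma b_num_eq_of_a_num_eq (p t : 'S_m) :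
  (forall S, a_num p n S = a_num t n S) -> forall S, b_num p n S = b_num t n S.
Proof. by move=> eq_a S; rewrite !b_num_sum; apply: eq_bigr => T _; apply: eq_a. Qed.

Lemma a_num_eq_of_b_num_eq (p t : 'S_m) :
  (forall S, b_num p n S = b_num t n S) -> forall S, a_num p n S = a_num t n S.
Proof.
move=> eq_b S; have [k] := ubnP (#|` U| - #|` S|).
elim: k S => // k IHk S ltSk.
have [SU|SU] := boolP (S `<=` U); last by rewrite !a_num_eq0.
have := eq_b S; rewrite !b_num_sum_proper //.
suff -> : \sum_(T <- fpowerset U | S `<` T) a_num p n T =
          \sum_(T <- fpowerset U | S `<` T) a_num t n T by move/addIn.
rewrite big_seq_cond [RHS]big_seq_cond; apply: eq_bigr => T /andP[].
rewrite fpowersetE => TU ST; apply: IHk.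
by have := fproper_ltn_card ST; have := fsubset_leq_card TU; lia.
Qed.

End Inversion.

Lemma sort_fset_sorted (S : {fset nat}) : sorted ltn (sort leq S).
Proof.
by rewrite ltn_sorted_uniq_leq sort_uniq fset_uniq sort_sorted //; apply: leq_total.
Qed.

Section ClusterSets.
Variables (m n : nat).
Implicit Types (p t : 'S_m) (S : {fset nat}).

Lemma b_num_eq0_of_gap p S (x y : nat) : x \in S -> y \in S -> x < y -> y < x + m ->
  ~~ overlap p (y - x) -> b_num p n S = 0.
Proof.
move=> xS yS xy yxm ov; apply/eqP; rewrite cards_eq0; apply/eqP/setP => s.
rewrite !inE; apply: contraNF ov => /fsubsetP SEm.
exact: overlap_Em (SEm _ xS) (SEm _ yS) xy yxm.
Qed.

(* An S of this shape violating the overlap condition at some gap (necessarily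
   < m) lies in no Em(p, s), so both sides vanish. *)
Lemma r_num_eq_b_num p S :
  [&& S `<=` positions m n, head 0 (sort leq S) == 1 & last 0 (sort leq S) == n - m + 1] ->
  sorted (fun x y => y < x + m) (sort leq S) -> r_num p n S = b_num p n S.
Proof.
case/and3P=> SU headS lastS close; rewrite /r_num /cluster_set SU headS lastS /=.
case: ifP => // /negbT /allPn[j]; rewrite mem_iota add0n => /andP[_ lt_j] ov.
have lt_j1 : j.+1 < size (sort leq S) by lia.
symmetry; apply: b_num_eq0_of_gap ov.
- by rewrite -(mem_sort leq) mem_nth // ltnW.
- by rewrite -(mem_sort leq) mem_nth.
- by apply: (sorted_ltn_nth ltn_trans 0 (sort_fset_sorted S)); rewrite ?inE // ltnW.
- exact: (sortedP 0 close).
Qed.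

Lemma cluster_set_close p S :
  cluster_set p n S -> sorted (fun x y => y < x + m) (sort leq S).
Proof.
case/and4P=> _ _ _ /allP ov; apply/(sortedP 0) => j lt_j.
have /ov/and3P[] : j \in iota 0 (size (sort leq S)).-1 by rewrite mem_iota; lia.
lia.
Qed.

Lemma r_num_eq_b_num_of_cluster_set p t S :
  cluster_set p n S -> r_num t n S = b_num t n S.
Proof.
move=> pS; apply: r_num_eq_b_num (cluster_set_close pS).
by case/and4P: pS => -> -> -> _.
Qed.

End ClusterSets.

Definition subword n (a l : nat) (s : 'S_n) : seq nat := take l (drop a (word s)).

Section Subwords.
Variables (n a l : nat).
Implicit Types (s : 'S_n).

Lemma size_subword s : a + l <= n -> size (subword a l s) = l.
Proof. by move=> fit; rewrite size_take size_drop size_word; case: (ltnP l (n - a)); lia. Qed.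

Lemma uniq_subword s : uniq (subword a l s).
Proof. by rewrite take_uniq ?drop_uniq ?uniq_word. Qed.

Lemma nth_subword s (k : nat) (i : 'I_n) :
  k < l -> val i = a + k -> nth 0 (subword a l s) k = (s i).+1.
Proof. by move=> kl ei; rewrite nth_take // nth_drop -ei nth_word. Qed.

Lemma eq_subword s1 s2 : (forall i : 'I_n, a <= i < a + l -> s1 i = s2 i) ->
  subword a l s1 = subword a l s2.
Proof.
move=> eq_s; apply: (@eq_from_nth _ 0); first by rewrite !size_take !size_drop !size_word.
rewrite size_take size_drop size_word => k lt_k.
have [kl akn] : k < l /\ a + k < n by case: (ltnP l (n - a)) lt_k => /= *; lia.
by rewrite !(nth_subword _ (i := Ordinal akn)) // eq_s //= leq_addr ltn_add2l.
Qed.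

End Subwords.

(* The identity unless [w] consists of [l] distinct integers, which keeps it injective. *)
Definition std_fun l (w : seq nat) (k : 'I_l) : 'I_l :=
  if (size w == l) && uniq w then insubd k (count (fun y => y < nth 0 w k) w) else k.

Lemma std_funE l (w : seq nat) (k : 'I_l) : size w = l -> uniq w ->
  val (std_fun w k) = count (fun y => y < nth 0 w k) w.
Proof.
move=> size_w uniq_w; rewrite /std_fun size_w eqxx uniq_w val_insubd.
suff : count (fun y => y < nth 0 w k) w < size w by rewrite size_w => ->.
rewrite -(count_predC (fun y => y < nth 0 w k)) -addn1 leq_add2l -has_count.
by apply/hasP; exists (nth 0 w k); rewrite ?mem_nth ?size_w //= ltnn.
Qed.

Lemma std_fun_inj l (w : seq nat) : injective (@std_fun l w).
Proof.
have [/andP[/eqP size_w uniq_w] k1 k2 | not_w k1 k2] := boolP ((size w == l) && uniq w);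
  last by rewrite /std_fun (negbTE not_w).
move/(congr1 val); rewrite !std_funE // => eq_count.
have mem_w (k : 'I_l) : nth 0 w k \in w by rewrite mem_nth ?size_w.
have eq_rank : rank w (nth 0 w k1) = rank w (nth 0 w k2) by rewrite /rank eq_count.
apply/val_inj/eqP; rewrite -(nth_uniq 0 _ _ uniq_w) ?size_w ?ltn_ord //; apply/eqP.
case: (ltngtP (nth 0 w k1) (nth 0 w k2)) => // lt_k;
  by move: lt_k; rewrite -(rank_mono (mem_w _) (mem_w _)) eq_rank ltnn.
Qed.

Definition std_perm l (w : seq nat) : 'S_l := perm (@std_fun_inj l w).

Lemma std_permE l (w : seq nat) (k : 'I_l) : size w = l -> uniq w ->
  val (std_perm l w k) = count (fun y => y < nth 0 w k) w.
Proof. by rewrite permE; apply: std_funE. Qed.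

Lemma word_std_perm l (w : seq nat) : size w = l -> uniq w -> word (std_perm l w) = st w.
Proof.
move=> size_w uniq_w; apply: (@eq_from_nth _ 0) => [|k]; first by rewrite size_word size_map.
rewrite size_word => lt_k; rewrite (nth_map 0) ?size_w //.
by rewrite -[k]/(val (Ordinal lt_k)) nth_word std_permE.
Qed.

Definition window_pattern n (a l : nat) (s : 'S_n) : 'S_l := std_perm l (subword a l s).

Lemma word_window_pattern n a l (s : 'S_n) : a + l <= n ->
  word (window_pattern a l s) = st (subword a l s).
Proof. by move=> fit; rewrite word_std_perm ?size_subword ?uniq_subword. Qed.

Lemma window_index n a l (i : 'I_n) : a <= i < a + l -> {k : 'I_l | val i = a + k}.
Proof.
case/andP=> ai il; have kl : i - a < l by lia.
by exists (Ordinal kl) => /=; lia.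
Qed.

Section WindowPerm.
Variables (n a l : nat).

Definition window_fun (t : 'S_l) (i : 'I_n) : 'I_n :=
  if (a + l <= n) && (a <= i) then
    if insub (i - a) is Some k then insubd i (a + t k) else i
  else i.

Lemma window_fun_out (t : 'S_l) (i : 'I_n) : ~~ (a <= i < a + l) -> window_fun t i = i.
Proof.
rewrite /window_fun negb_and -leqNgt -ltnNge => /orP[ia | ali].
  by rewrite [a <= i]leqNgt ia andbF.
by case: ifP => // /andP[_ ai]; rewrite insubN //; lia.
Qed.

Lemma window_fun_in (t : 'S_l) (i : 'I_n) (k : 'I_l) : a + l <= n -> val i = a + k ->
  val (window_fun t i) = a + t k.
Proof.
move=> fit ei; rewrite /window_fun fit ei leq_addr addKn insubT /= => [|kl].
  exact: ltn_ord.
rewrite val_insubd (_ : Sub (val k) kl = k :> 'I_l); last exact: val_inj.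
by have := ltn_ord (t k); case: ifP => //; lia.
Qed.

Lemma window_funK (t : 'S_l) : cancel (window_fun t) (window_fun t^-1).
Proof.
move=> i; have [fit | nfit] := leqP (a + l) n; last first.
  by rewrite /window_fun [a + l <= n]leqNgt nfit.
have [/window_index[k ei] | out] := boolP (a <= i < a + l); last by rewrite !window_fun_out.
by apply: val_inj; rewrite (window_fun_in _ fit (window_fun_in _ fit ei)) permK.
Qed.

Definition window_perm (t : 'S_l) : 'S_n := perm (can_inj (window_funK t)).

Lemma window_perm_out (t : 'S_l) (i : 'I_n) :
  ~~ (a <= i < a + l) -> window_perm t i = i.
Proof. by rewrite permE; apply: window_fun_out. Qed.

Lemma window_perm_in (t : 'S_l) (i : 'I_n) (k : 'I_l) : a + l <= n -> val i = a + k ->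
  val (window_perm t i) = a + t k.
Proof. by rewrite permE; apply: window_fun_in. Qed.

Lemma window_pattern_window_perm_out (t : 'S_l) (s : 'S_n) (a' l' : nat) :
  (a' + l' <= a) || (a + l <= a') ->
  window_pattern a' l' (window_perm t * s)%g = window_pattern a' l' s.
Proof.
move=> disj; congr std_perm; apply: eq_subword => i i_in.
by rewrite permM window_perm_out //; apply/negP => /andP[]; move: i_in disj => /andP[]; lia.
Qed.

Lemma perm_eq_map_perm_enum (t : 'S_l) : perm_eq (map t (enum 'I_l)) (enum 'I_l).
Proof.
apply: uniq_perm; [|exact: enum_uniq|].
- by rewrite map_inj_uniq ?enum_uniq //; apply: perm_inj.
- by move=> i; rewrite -codomE perm_onto mem_enum.
Qed.

Lemma subword_window_perm (t : 'S_l) (s : 'S_n) : a + l <= n ->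
  subword a l (window_perm t * s)%g = [seq nth 0 (subword a l s) (t k) | k <- enum 'I_l].
Proof.
move=> fit; apply: (@eq_from_nth _ 0) => [|k].
  by rewrite size_subword // size_map size_enum_ord.
rewrite size_subword // => kl; have akn : a + k < n by lia.
rewrite (nth_subword _ (i := Ordinal akn)) // (nth_map (Ordinal kl)) ?size_enum_ord //.
have akn' : a + t (Ordinal kl) < n by have := ltn_ord (t (Ordinal kl)); lia.
rewrite -[k]/(val (Ordinal kl)) nth_ord_enum (nth_subword _ (i := Ordinal akn')) //.
by rewrite permM; congr (s _).+1; apply: val_inj; rewrite (window_perm_in _ fit (k := Ordinal kl)).
Qed.

Lemma window_pattern_window_perm (t : 'S_l) (s : 'S_n) : a + l <= n ->
  window_pattern a l (window_perm t * s)%g = (t * window_pattern a l s)%g.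
Proof.
move=> fit; apply/permP => k; apply: val_inj; rewrite permM.
set w := subword a l s.
have w_enum : w = [seq nth 0 w k | k : 'I_l <- enum 'I_l].
  by rewrite -{1}(mkseq_nth 0 w) size_subword // /mkseq -val_enum_ord -map_comp.
have perm_w : perm_eq [seq nth 0 w (t k) | k : 'I_l <- enum 'I_l] w.
  rewrite {2}w_enum (map_comp (fun k : 'I_l => nth 0 w k) t).
  exact/perm_map/perm_eq_map_perm_enum.
rewrite !std_permE ?size_subword ?uniq_subword // subword_window_perm //.
by rewrite (nth_map k) ?size_enum_ord // nth_ord_enum; apply: (seq.permP perm_w).
Qed.

End WindowPerm.

Arguments window_perm {n} a {l} t.

Section WindowCounting.
Variables (n a l : nat) (R : pred 'S_n).
Hypotheses (fit : a + l <= n)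
  (R_inv : forall (t : 'S_l) (s : 'S_n), R (window_perm a t * s)%g = R s).

Let fibre (q : 'S_l) := [set s : 'S_n | (window_pattern a l s == q) && R s].

Lemma card_fibre_le (q q' : 'S_l) : #|fibre q| <= #|fibre q'|.
Proof.
(* left multiplication by the window permutation [q' * q^-1] maps fibre q into fibre q' *)
rewrite -(card_imset (fibre q) (mulgI (window_perm a (q' * q^-1)))).
apply/subset_leq_card/subsetP => x /imsetP[s]; rewrite !inE => /andP[/eqP qs Rs] ->.
by rewrite window_pattern_window_perm // qs R_inv Rs -mulgA mulVg mulg1 eqxx.
Qed.

Lemma card_window_pattern (A : pred 'S_l) :
  #|[set s | A (window_pattern a l s) && R s]| = #|A| * #|fibre 1|.
Proof.
rewrite -sum1dep_card (partition_big (window_pattern a l) A) => [|s /andP[] //].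
rewrite -sum_nat_const; apply: eq_bigr => q Aq.
have -> : #|fibre 1| = #|fibre q| by apply/eqP; rewrite eqn_leq !card_fibre_le.
rewrite sum1dep_card; apply: eq_card => s; rewrite !inE.
by case: eqP => [->|]; rewrite ?Aq ?andbF ?andbT.
Qed.

Lemma eq_card_window_pattern (A B : pred 'S_l) : #|A| = #|B| ->
  #|[set s | A (window_pattern a l s) && R s]| = #|[set s | B (window_pattern a l s) && R s]|.
Proof. by move=> eq_AB; rewrite !card_window_pattern eq_AB. Qed.

End WindowCounting.

Section Independence.
Variables (n : nat) (I : eqType) (start len : I -> nat).
Implicit Types (A B : forall i : I, pred 'S_(len i)) (R : pred 'S_n).

Let before (i j : I) := start i + len i <= start j.

Let before_trans : transitive before.
Proof. by move=> j i k; rewrite /before; lia. Qed.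

Lemma eq_card_window_patterns A B (L : seq I) R :
  sorted before L -> all (fun i => start i + len i <= n) L ->
  {in L, forall i, #|A i| = #|B i|} ->
  {in L, forall i (t : 'S_(len i)) s, R (window_perm (start i) t * s)%g = R s} ->
  #|[set s | all (fun i => A i (window_pattern (start i) (len i) s)) L && R s]| =
  #|[set s | all (fun i => B i (window_pattern (start i) (len i) s)) L && R s]|.
Proof.
elim: L R => [//|i L IHL] R /= sorted_iL /andP[fit_i fit_L] eq_AB R_inv.
have /andP[i_before sorted_L] : all (before i) L && sorted before L.
  by rewrite -(path_sortedE before_trans).
pose PA (s : 'S_n) := all (fun j => A j (window_pattern (start j) (len j) s)) L.
transitivity #|[set s | A i (window_pattern (start i) (len i) s) && (PA s && R s)]|.
  by apply: eq_card => s; rewrite !inE andbA.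
rewrite (eq_card_window_pattern fit_i _ (B := B i)) ?eq_AB ?mem_head //; last first.
  move=> t s; rewrite R_inv ?mem_head //; congr andb; apply: eq_in_all => j jL.
  by rewrite window_pattern_window_perm_out //; apply/orP; right; apply: (allP i_before).
transitivity #|[set s | PA s && (B i (window_pattern (start i) (len i) s) && R s)]|.
  by apply: eq_card => s; rewrite !inE andbCA.
rewrite IHL // => [|j jL|j jL t s].
- by apply: eq_card => s; rewrite !inE andbCA andbA.
- by apply: eq_AB; rewrite inE jL orbT.
- rewrite R_inv ?inE ?jL ?orbT // window_pattern_window_perm_out //.
  by apply/orP; left; apply: (allP i_before).
Qed.

End Independence.

Lemma occurs_at_window_pattern m (p : 'S_m) n (s : 'S_n) (a l i : nat) :
  a + l <= n -> a < i -> i.-1 + m <= a + l ->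
  occurs_at p s i = occurs_at p (window_pattern a l s) (i - a).
Proof.
move=> fit ai im; rewrite /occurs_at word_window_pattern // /factor.
rewrite [st (subword _ _ _)]stE -map_drop -map_take st_map_rank => [|x /mem_take /mem_drop //].
congr (st _ == _); rewrite /subword.
have -> : l = l - (i - a).-1 + (i - a).-1 by lia.
rewrite -take_drop take_takel; last by lia.
by rewrite drop_drop; congr (take _ (drop _ _)); lia.
Qed.

Section Clusters.
Variable m : nat.

Definition chain (c : seq nat) : bool :=
  (c != [::]) && sorted (fun x y => x < y < x + m) c.

Fixpoint clusters (s : seq nat) : seq (seq nat) :=
  if s is x :: s' then
    if clusters s' is c :: cs then
      if head 0 c < x + m then (x :: c) :: cs else [:: x] :: c :: cs
    else [:: [:: x]]
  else [::].

Lemma flatten_clusters (s : seq nat) : flatten (clusters s) = s.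
Proof.
elim: s => //= x s; case: (clusters s) => [<- //|c cs /= <-].
by case: ifP.
Qed.

Lemma clusters_chain (s : seq nat) : sorted ltn s -> all chain (clusters s).
Proof.
elim: s => //= x s IHs sorted_xs; have /IHs := path_sorted sorted_xs.
have x_lt := order_path_min ltn_trans sorted_xs.
have := flatten_clusters s; case: (clusters s) => //= c cs flat_s /andP[chain_c chain_cs].
case: ifP => //= close_x; rewrite ?chain_c chain_cs andbT //; case/andP: chain_c.
case: c flat_s close_x => //= y c flat_s close_x _ path_c.
by rewrite /chain /= path_c close_x (allP x_lt) // -flat_s mem_head.
Qed.

Lemma clusters_sorted (s : seq nat) : sorted ltn s ->
  sorted (fun c c' => last 0 c + m <= head 0 c') (clusters s).
Proof.
elim: s => //= x s IHs sorted_xs; have sorted_s := path_sorted sorted_xs.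
have := clusters_chain sorted_s; have := IHs sorted_s.
case: (clusters s) => //= c cs sorted_ccs /andP[/andP[c_nil _] _].
case: ifP => //= close_x; last by rewrite sorted_ccs leqNgt close_x.
by case: c c_nil sorted_ccs close_x => // y c _; case: cs.
Qed.

End Clusters.

Lemma sorted_ltn_bounds (c : seq nat) (i : nat) :
  sorted ltn c -> i \in c -> head 0 c <= i <= last 0 c.
Proof.
case: c => // y c; elim: c y i => [|z c IHc] y i /=.
  by move=> _; rewrite mem_seq1 => /eqP ->; rewrite leqnn.
case/andP=> yz path_z; rewrite in_cons => /orP[/eqP -> | /(IHc _ _ path_z) /andP[zi ->]].
  by have /andP[_ zl] := IHc z z path_z (mem_head _ _); rewrite leqnn (leq_trans (ltnW yz)).
by rewrite (leq_trans (ltnW yz)).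
Qed.

Lemma chain_sorted m (c : seq nat) : chain m c -> sorted ltn c.
Proof. by case/andP=> _; apply: sub_sorted => x y /andP[]. Qed.

Lemma chain_head_mem m (c : seq nat) : chain m c -> head 0 c \in c.
Proof. by case/andP; case: c => //= x s _ _; apply: mem_head. Qed.

Lemma chain_last_mem m (c : seq nat) : chain m c -> last 0 c \in c.
Proof. by case/andP; case: c => //= x s _ _; apply: mem_last. Qed.

Lemma chain_head_last m (c : seq nat) : chain m c -> head 0 c <= last 0 c.
Proof.
move=> chain_c.
by case/andP: (sorted_ltn_bounds (chain_sorted chain_c) (chain_last_mem chain_c)).
Qed.

(* The occurrences at the positions of a run [c] cover the window of 0-based
   positions [wstart c, wstart c + wlen m c). *)
Definition wstart (c : seq nat) : nat := (head 0 c).-1.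
Definition wlen (m : nat) (c : seq nat) : nat := last 0 c - head 0 c + m.
Definition shift (c : seq nat) : {fset nat} := [fset i - wstart c | i in c].

Section ClusterWindow.
Variables (m : nat) (c : seq nat).
Hypotheses (chain_c : chain m c) (head_gt0 : 0 < head 0 c).

Let sorted_c : sorted ltn c := chain_sorted chain_c.

Let bounds i : i \in c -> head 0 c <= i <= last 0 c.
Proof. exact: sorted_ltn_bounds. Qed.

Lemma wstart_wlen : wstart c + wlen m c = (last 0 c).-1 + m.
Proof. by have := chain_head_last chain_c; rewrite /wstart /wlen; lia. Qed.

Lemma mem_cluster_window (i : nat) :
  i \in c -> wstart c < i /\ i.-1 + m <= wstart c + wlen m c.
Proof. by move=> /bounds; rewrite wstart_wlen /wstart; lia. Qed.

Lemma mem_shift_positions (i : nat) : i \in c -> i - wstart c \in positions m (wlen m c).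
Proof. by move=> /bounds; rewrite mem_positions /wstart /wlen; lia. Qed.

Lemma sort_shift : sort leq (shift c) = [seq i - wstart c | i <- c].
Proof.
apply: (irr_sorted_eq ltn_trans ltnn (sort_fset_sorted _)).
  apply: (homo_sorted_in (P := mem c)) (allss c) sorted_c => x y /bounds ? /bounds ?.
  by rewrite /wstart; lia.
by move=> x; rewrite mem_sort; apply/imfsetP/mapP => -[i ic ->]; exists i.
Qed.

Lemma r_num_shift (t : 'S_m) : r_num t (wlen m c) (shift c) = b_num t (wlen m c) (shift c).
Proof.
apply: r_num_eq_b_num; rewrite sort_shift; last first.
  case/andP: chain_c => _; apply: (homo_sorted_in (P := mem c)) (allss c).
  by move=> x y /bounds ? /bounds ?; rewrite /wstart; lia.
apply/and3P; split.
- by apply/fsubsetP => _ /imfsetP[i ic ->]; apply: mem_shift_positions.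
- by case: c chain_c head_gt0 => //= x s _ x_gt0; rewrite /wstart /=; apply/eqP; lia.
- have := chain_head_last chain_c.
  rewrite /wstart /wlen; case: c chain_c head_gt0 => //= x s _ x_gt0.
  by rewrite (last_map (fun i => i - x.-1)); move=> *; apply/eqP; lia.
Qed.

Lemma all_occurs_at_cluster n (p : 'S_m) (s : 'S_n) : wstart c + wlen m c <= n ->
  all (occurs_at p s) c = (shift c `<=` Em p (window_pattern (wstart c) (wlen m c) s)).
Proof.
move=> fit; apply/allP/fsubsetP => [occ _ /imfsetP[i ic ->] | sub i ic].
  have [ai im] := mem_cluster_window ic.
  by rewrite mem_Em mem_shift_positions // -occurs_at_window_pattern ?occ.
have [ai im] := mem_cluster_window ic; rewrite (occurs_at_window_pattern _ _ fit ai im).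
by have := sub (i - wstart c); rewrite mem_Em => /(_ (in_imfset _ _ ic)) /andP[].
Qed.

End ClusterWindow.

Lemma all_flatten (T : Type) (a : pred T) (ss : seq (seq T)) :
  all a (flatten ss) = all (all a) ss.
Proof. by elim: ss => //= s ss IHss; rewrite all_cat IHss. Qed.

Section PositionClusters.
Variables (m n : nat) (S : {fset nat}).
Hypotheses (mn : m <= n) (SU : S `<=` positions m n).

Let sorted_S := sort_fset_sorted S.

Let mem_S i : i \in sort leq S -> 0 < i <= n - m + 1.
Proof. by rewrite mem_sort => /(fsubsetP SU); rewrite mem_positions. Qed.

Let mem_clusters c i : c \in clusters m (sort leq S) -> i \in c -> 0 < i <= n - m + 1.
Proof.
move=> cS ic; apply: mem_S; rewrite -(flatten_clusters m (sort leq S)).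
by apply/flattenP; exists c.
Qed.

Lemma position_cluster_window c : c \in clusters m (sort leq S) ->
  [/\ chain m c, 0 < head 0 c & wstart c + wlen m c <= n].
Proof.
move=> cS; have chain_c := allP (clusters_chain m sorted_S) c cS.
have /andP[head_gt0 _] := mem_clusters cS (chain_head_mem chain_c).
have := mem_clusters cS (chain_last_mem chain_c).
by rewrite (wstart_wlen chain_c head_gt0); split => //; lia.
Qed.

Lemma position_clusters_sorted :
  sorted (fun c c' => wstart c + wlen m c <= wstart c') (clusters m (sort leq S)).
Proof.
apply: (sub_in_sorted (P := mem (clusters m (sort leq S)))) (allss _) (clusters_sorted m sorted_S).
move=> c c' /position_cluster_window[chain_c head_c _] /position_cluster_window[_ head_c' _].
by have := chain_head_last chain_c; rewrite (wstart_wlen chain_c head_c) /wstart; lia.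
Qed.

Lemma b_num_clusters (p : 'S_m) : b_num p n S =
  #|[set s : 'S_n | all (fun c => shift c `<=` Em p (window_pattern (wstart c) (wlen m c) s))
                 (clusters m (sort leq S)) && true]|.
Proof.
apply: eq_card => s; rewrite !inE andbT.
transitivity (all (occurs_at p s) (sort leq S)).
  apply/fsubsetP/allP => [sub i | occ i iS].
    by rewrite mem_sort => /sub; rewrite mem_Em => /andP[].
  by rewrite mem_Em (fsubsetP SU) // occ // mem_sort.
rewrite -[in LHS](flatten_clusters m (sort leq S)) all_flatten; apply: eq_in_all => c cS.
by have [chain_c head_c fit] := position_cluster_window cS; apply: all_occurs_at_cluster.
Qed.

End PositionClusters.

Lemma b_num_eq_of_r_num_eq m (p t : 'S_m) :
  (forall l S, r_num p l S = r_num t l S) -> forall n S, b_num p n S = b_num t n S.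
Proof.
move=> eq_r n S.
have [nm|mn] := ltnP n m; first by apply: eq_card => s; rewrite !inE !Em_fset0.
have [SU|SU] := boolP (S `<=` positions m n); last by rewrite !b_num_eq0.
rewrite !(b_num_clusters mn SU).
apply: (eq_card_window_patterns (A := fun c q => shift c `<=` Em p q)
                                (B := fun c q => shift c `<=` Em t q)) => //.
- exact: position_clusters_sorted mn SU.
- by apply/allP => c /(position_cluster_window mn SU)[].
- move=> c /(position_cluster_window mn SU)[chain_c head_c _].
  by have := eq_r (wlen m c) (shift c); rewrite !r_num_shift // /b_num !cardsE.
Qed.

Theorem proposition5p1 (m : nat) (p t : 'S_m) :
  super_strongly_cwilf p t <->
  (forall (n : nat) (S : {fset nat}), r_num p n S = r_num t n S).
Proof.
split=> [eq_a n S | eq_r n].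
- have eq_b := b_num_eq_of_a_num_eq (eq_a n) S.
  have [/orP[] cS | ] := boolP (cluster_set p n S || cluster_set t n S).
  + by rewrite !(r_num_eq_b_num_of_cluster_set _ cS).
  + by rewrite !(r_num_eq_b_num_of_cluster_set _ cS).
  + by rewrite negb_or /r_num => /andP[/negbTE -> /negbTE ->].
- by apply: a_num_eq_of_b_num_eq => S; apply: b_num_eq_of_r_num_eq.
Qed.
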